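(* Let $f:\mathbb{R}^n\to\mathbb{R}$ ($n\ge 1$) be a multivariate polynomial of degree at most $4$, and let $\mu_f:\mathbb{R}^n\times(0,\infty)\to\mathbb{R}$ be its Steklov function, \[ \mu_f(x,t) := \frac{1}{(2t)^n}\int_{x_n-t}^{x_n+t}\cdots\int_{x_1-t}^{x_1+t} f(\tau_1,\ldots,\tau_n)\,d\tau_1\cdots d\tau_n,\qquad x=(x_1,\ldots,x_n). \] Then for all $x\in\mathbb{R}^n$ and $t>0$, \[ \mu_f(x,t) = f(x) + \frac{t^2}{6}\sum_{i=1}^n f_{ii}(x) + \left(\frac{1}{120}\sum_{i=1}^n f_{iiii} + \frac{1}{36}\sum_{\substack{i,j=1\\ j>i}}^n f_{iijj}\right)t^4, \] where $f_{ii}:=\partial^2 f/\partial x_i^2$, $f_{iiii}:=\partial^4 f/\partial x_i^4$ and $f_{iijj}:=\partial^4 f/\partial x_i^2\partial x_j^2$ (the fourth-order derivatives being constants). *)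

From Stdlib Require Import Reals.
From Coquelicot Require Import Coquelicot.
From HB Require Import structures.
From mathcomp Require Import all_boot all_algebra.
From mathcomp Require Import Rstruct.
From mathcomp.multinomials Require Import mpoly.

Set Implicit Arguments. Unset Strict Implicit. Unset Printing Implicit Defensive.
Import GRing.Theory.
Local Open Scope R_scope.

Definition upd (y : nat -> R) (k : nat) (s : R) : nat -> R :=
  fun i => if (i == k)%N then s else y i.

(* iter_int k F x t y = int_{x_{k-1}-t}^{x_{k-1}+t} ... int_{x_0-t}^{x_0+t}
   F(tau_0,...,tau_{k-1}, y_k, y_{k+1}, ...) dtau_0 ... dtau_{k-1}
   (innermost integral over coordinate 0, outermost over coordinate k-1). *)
Fixpoint iter_int (k : nat) (F : (nat -> R) -> R) (x : nat -> R) (t : R)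
  (y : nat -> R) : R :=
  match k with
  | O => F y
  | S k' => RInt (fun s => iter_int k' F x t (upd y k' s)) (x k' - t) (x k' + t)
  end.

Definition steklov (n : nat) (f : {mpoly R[n]}) (x : 'I_n -> R) (t : R) : R :=
  / (2 * t) ^ n *
  iter_int n (fun y => f.@[fun i : 'I_n => y (nat_of_ord i)])
    (fun k => match insub k with Some i => x i | None => 0 end) t
    (fun _ => 0).

From Stdlib Require Import Reals.
From Coquelicot Require Import Coquelicot.
From HB Require Import structures.
From mathcomp Require Import all_boot all_algebra.
From mathcomp Require Import Rstruct.
From mathcomp.multinomials Require Import mpoly.
From mathcomp Require Import ring.

(* Averaging a polynomial p over [z_i - t, z_i + t] in the single variable i
   only sees the even powers of the shift, so for monomials of degree at most 5
   in that variable the average is exactly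
     p + t^2/6 D_i^2 p + t^4/120 D_i^4 p.
   The Steklov function is obtained by applying these averages for
   i = 0, ..., n-1 in turn.  When f has total degree at most 4, every
   derivative of order 5 or more vanishes, so composing the operators
   1 + t^2/6 D_i^2 + t^4/120 D_i^4 only adds the cross terms
   (t^2/6)^2 D_i^2 D_j^2 f for i < j. *)

Set Implicit Arguments.
Unset Strict Implicit.
Unset Printing Implicit Defensive.

Import GRing.Theory Num.Theory.
Local Open Scope ring_scope.

Lemma is_RInt_sum (I : eqType) (r : seq I) (F : I -> R -> R) (l : I -> R) (a b : R) :
  (forall i, i \in r -> is_RInt (F i) a b (l i)) ->
  is_RInt (fun s => \sum_(i <- r) F i s) a b (\sum_(i <- r) l i).
Proof.
elim: r => [_|j r IH intF].
  apply: (is_RInt_ext (fun _ => 0 : R)) => [s _|]; first by rewrite big_nil.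
  have := is_RInt_const a b (0 : R).
  by rewrite big_nil /scal /= /mult /= RmultE mulr0.
apply: (is_RInt_ext (fun s => F j s + \sum_(i <- r) F i s)) => [s _|].
  by rewrite big_cons.
rewrite big_cons; apply: is_RInt_plus; first exact/intF/mem_head.
by apply: IH => i ri; apply/intF; rewrite in_cons ri orbT.
Qed.

Lemma is_RInt_mull (f : R -> R) (a b c l : R) :
  is_RInt f a b l -> is_RInt (fun s => c * f s) a b (c * l).
Proof. exact: is_RInt_scal. Qed.

Lemma is_RInt_pow_centered (a t : R) (d : nat) : (d <= 5)%N ->
  is_RInt (fun s => s ^+ d) (a - t) (a + t)
    (2 * t * (a ^+ d + t ^+ 2 / 6 * (d ^_ 2)%:R * a ^+ (d - 2)
                     + t ^+ 4 / 120 * (d ^_ 4)%:R * a ^+ (d - 4))).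
Proof.
move=> le_d5; apply: (is_RInt_ext (fun s => pow s d)) => [s _|]; first exact: RpowE.
suff -> : 2 * t * (a ^+ d + t ^+ 2 / 6 * (d ^_ 2)%:R * a ^+ (d - 2)
                     + t ^+ 4 / 120 * (d ^_ 4)%:R * a ^+ (d - 4))
    = (a + t) ^+ d.+1 / d.+1%:R - (a - t) ^+ d.+1 / d.+1%:R.
  by have := is_RInt_pow (a - t) (a + t) d; rewrite !RpowE RminusE !RdivE INRE.
by case: d le_d5 => [|[|[|[|[|[|//]]]]]] _; rewrite /= ?ffactnS ?ffactn0 /=; field.
Qed.

Definition coord_mean n (t : R) (i : 'I_n) (p : {mpoly R[n]}) : {mpoly R[n]} :=
  p + (t ^+ 2 / 6) *: p^`M(i)^`M(i) + (t ^+ 4 / 120) *: p^`M(i)^`M(i)^`M(i)^`M(i).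

Lemma coord_mean_is_linear n (t : R) (i : 'I_n) : linear (coord_mean t i).
Proof. by move=> c p q; rewrite /coord_mean !mderivD !mderivZ -!mul_mpolyC; ring. Qed.

HB.instance Definition _ n (t : R) (i : 'I_n) :=
  GRing.isLinear.Build R {mpoly R[n]} {mpoly R[n]} _ (coord_mean t i)
    (@coord_mean_is_linear n t i).

Lemma coord_meanD n (t : R) (i : 'I_n) : {morph coord_mean t i : p q / p + q}.
Proof. exact: linearD. Qed.

Lemma coord_meanZ n (t : R) (i : 'I_n) c p :
  coord_mean t i (c *: p) = c *: coord_mean t i p.
Proof. exact: linearZ. Qed.

Lemma coord_mean_sum n (t : R) (i : 'I_n) (I : Type) (r : seq I) (P : pred I) F :
  coord_mean t i (\sum_(j <- r | P j) F j) = \sum_(j <- r | P j) coord_mean t i (F j).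
Proof. exact: linear_sum. Qed.

Lemma is_RInt_mevalX_coord n (m : 'X_{1..n}) (z : 'I_n -> R) (i : 'I_n) (t : R) :
  (m i <= 5)%N ->
  is_RInt (fun s => ('X_[m] : {mpoly R[n]}).@[[eta z with i |-> s]]) (z i - t) (z i + t)
    (2 * t * (coord_mean t i 'X_[m]).@[z]).
Proof.
move=> le_mi5; pose K := \prod_(j < n | j != i) z j ^+ m j.
have mevalX_off k (v : 'I_n -> R) : (forall j, j != i -> v j = z j) ->
    ('X_[m - U_(i) *+ k] : {mpoly R[n]}).@[v] = K * v i ^+ (m i - k).
  move=> vz; rewrite mevalX (bigD1 i) //= mulrC mnmBE mulmnE mnm1E eqxx mul1n.
  congr (_ * _); apply: eq_bigr => j nji.
  by rewrite vz // mnmBE mulmnE mnm1E eq_sym (negbTE nji) mul0n subn0.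
have mevalX_z k : ('X_[m - U_(i) *+ k] : {mpoly R[n]}).@[z] = K * z i ^+ (m i - k).
  exact: mevalX_off.
suff -> : (coord_mean t i 'X_[m]).@[z] = K * (z i ^+ m i
      + t ^+ 2 / 6 * (m i ^_ 2)%:R * z i ^+ (m i - 2)
      + t ^+ 4 / 120 * (m i ^_ 4)%:R * z i ^+ (m i - 4)).
  rewrite mulrCA; apply: (is_RInt_ext (fun s => K * s ^+ m i)) => [s _|].
    rewrite -[m in 'X_[m]](subm0 m) -(mulm0n U_(i)) mevalX_off /= ?eqxx ?subn0 //.
    by move=> j /negbTE ->.
  exact/is_RInt_mull/is_RInt_pow_centered.
have mderiv2 p : p^`M(i)^`M(i) = p^`M(i, 2) by rewrite mderivn_iter.
have mderiv4 p : p^`M(i)^`M(i)^`M(i)^`M(i) = p^`M(i, 4) by rewrite mderivn_iter.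
rewrite /coord_mean mderiv4 mderiv2 !mderivnX -[m in 'X_[m]](subm0 m) -(mulm0n U_(i)).
by rewrite !mevalD !mevalZ !mevalX_z subn0; ring.
Qed.

Lemma is_RInt_meval_coord n (p : {mpoly R[n]}) (z : 'I_n -> R) (i : 'I_n) (t : R) :
  {in msupp p, forall m : 'X_{1..n}, (m i <= 5)%N} ->
  is_RInt (fun s => p.@[[eta z with i |-> s]]) (z i - t) (z i + t)
    (2 * t * (coord_mean t i p).@[z]).
Proof.
move=> le_p5; rewrite [X in coord_mean _ _ X]mpolyE coord_mean_sum raddf_sum mulr_sumr.
apply: (is_RInt_ext (fun s => \sum_(m <- msupp p)
                               p@_m * ('X_[m] : {mpoly R[n]}).@[[eta z with i |-> s]])).
  by move=> s _; rewrite mevalE; apply: eq_bigr => m _; rewrite mevalX.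
apply: is_RInt_sum => m /le_p5 le_mi5; rewrite coord_meanZ /= mevalZ mulrCA.
exact/is_RInt_mull/is_RInt_mevalX_coord.
Qed.

Lemma msize_mderiv (A : nzRingType) n (p : {mpoly A[n]}) i k :
  (msize p <= k.+1)%N -> (msize p^`M(i) <= k)%N.
Proof.
move=> le_pk; rewrite msizeE; apply/bigmax_leqP_seq => m.
rewrite mcoeff_msupp mcoeff_deriv => nz_m _.
have : (m + U_(i))%MM \in msupp p.
  by rewrite mcoeff_msupp; apply: contraNneq nz_m => ->; rewrite mul0rn.
by move/msize_mdeg_lt/leq_trans/(_ le_pk); rewrite mdegD mdeg1 addn1.
Qed.

Lemma msize_mderiv_le (A : nzRingType) n (p : {mpoly A[n]}) i :
  (msize p^`M(i) <= msize p)%N.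
Proof.
case def_k: (msize p) => [|k].
  by move/eqP: def_k; rewrite msize_poly_eq0 => /eqP ->; rewrite mderiv0 msize0.
by apply: leq_trans (leqnSn k); apply: msize_mderiv; rewrite def_k.
Qed.

Lemma big_ord_cond_ltnS (V : nmodType) n (P : pred 'I_n) (F : 'I_n -> V) k
    (lt_kn : (k < n)%N) :
  \sum_(i < n | P i && (i < k.+1)%N) F i
  = \sum_(i < n | P i && (i < k)%N) F i
    + (if P (Ordinal lt_kn) then F (Ordinal lt_kn) else 0).
Proof.
rewrite big_mkcond [X in _ = X + _]big_mkcond /= (bigD1 (Ordinal lt_kn)) //=.
rewrite [X in _ = X + _](bigD1 (Ordinal lt_kn)) //= ltnSn ltnn !andbT andbF add0r addrC.
by congr (_ + _); apply: eq_bigr => i; rewrite -val_eqE /= ltnS leq_eqVlt => /negbTE->.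
Qed.

Section SteklovPoly.

Variables (n : nat) (f : {mpoly R[n]}) (t : R).
Hypothesis msize_f : (msize f <= 5)%N.

Lemma mderiv5_eq0 a b c d e : f^`M(a)^`M(b)^`M(c)^`M(d)^`M(e) = 0.
Proof. by apply/eqP; rewrite -msize_poly_eq0 -leqn0; do 5!apply: msize_mderiv. Qed.

Definition steklov_poly k : {mpoly R[n]} :=
  f + (t ^+ 2 / 6) *: \sum_(i < n | (i < k)%N) f^`M(i)^`M(i)
    + (t ^+ 4 / 120) *: \sum_(i < n | (i < k)%N) f^`M(i)^`M(i)^`M(i)^`M(i)
    + (t ^+ 2 / 6) ^+ 2 *: \sum_(i < n) \sum_(j < n | (i < j < k)%N)
                             f^`M(i)^`M(i)^`M(j)^`M(j).

Lemma steklov_poly0 : steklov_poly 0 = f.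
Proof.
have sum_ltn0 (P : pred 'I_n) (F : 'I_n -> {mpoly R[n]}) :
    \sum_(i < n | P i && (i < 0)%N) F i = 0.
  by apply: big_pred0 => i; rewrite ltn0 andbF.
rewrite /steklov_poly (sum_ltn0 xpredT) (sum_ltn0 xpredT) big1 => [|i _].
  by rewrite !scaler0 !addr0.
exact: sum_ltn0.
Qed.

Lemma steklov_poly_full : steklov_poly n =
  f + (t ^+ 2 / 6) *: \sum_(i < n) f^`M(i)^`M(i)
    + (t ^+ 4 / 120) *: \sum_(i < n) f^`M(i)^`M(i)^`M(i)^`M(i)
    + (t ^+ 2 / 6) ^+ 2 *: \sum_(i < n) \sum_(j < n | (i < j)%N)
                             f^`M(i)^`M(i)^`M(j)^`M(j).
Proof.
have sum_ltn_n (P : pred 'I_n) (F : 'I_n -> {mpoly R[n]}) :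
    \sum_(i < n | P i && (i < n)%N) F i = \sum_(i < n | P i) F i.
  by apply: eq_bigl => i; rewrite ltn_ord andbT.
rewrite /steklov_poly (sum_ltn_n xpredT) (sum_ltn_n xpredT).
by congr (_ + _ *: _); apply: eq_bigr => i _; apply: sum_ltn_n.
Qed.

Lemma msize_steklov_poly k : (msize (steklov_poly k) <= 5)%N.
Proof.
have leD p q : (msize p <= 5 -> msize q <= 5 -> msize (p + q) <= 5)%N.
  by move=> le_p le_q; rewrite (leq_trans (msizeD_le _ _)) // geq_max le_p.
have leZ c p : (msize p <= 5 -> msize (c *: p) <= 5)%N.
  exact/leq_trans/msizeZ_le.
have le_sum (I : finType) (P : pred I) (F : I -> {mpoly R[n]}) :
    (forall i, msize (F i) <= 5)%N -> (msize (\sum_(i | P i) F i) <= 5)%N.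
  by move=> leF; rewrite (leq_trans (msize_sum _ _ _)) //; apply/bigmax_leqP.
have leM p i : (msize p <= 5 -> msize p^`M(i) <= 5)%N.
  exact/leq_trans/msize_mderiv_le.
by rewrite /steklov_poly; repeat first
  [exact: msize_f | apply: (leD) | apply: (leZ) | apply: (le_sum) => ? | apply: (leM)].
Qed.

Lemma coord_mean_mderiv2 (o a b : 'I_n) :
  coord_mean t o f^`M(a)^`M(b) = f^`M(a)^`M(b) + (t ^+ 2 / 6) *: f^`M(a)^`M(b)^`M(o)^`M(o).
Proof. by rewrite /coord_mean mderiv5_eq0 mderiv0 scaler0 addr0. Qed.

Lemma coord_mean_mderiv4 (o a b c d : 'I_n) :
  coord_mean t o f^`M(a)^`M(b)^`M(c)^`M(d) = f^`M(a)^`M(b)^`M(c)^`M(d).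
Proof. by rewrite /coord_mean mderiv5_eq0 !mderiv0 !scaler0 !addr0. Qed.

Lemma coord_mean_steklov_poly k (lt_kn : (k < n)%N) :
  coord_mean t (Ordinal lt_kn) (steklov_poly k) = steklov_poly k.+1.
Proof.
set o := Ordinal lt_kn.
have cross_sum : \sum_(i < n) \sum_(j < n | (i < j < k.+1)%N) f^`M(i)^`M(i)^`M(j)^`M(j)
    = \sum_(i < n) \sum_(j < n | (i < j < k)%N) f^`M(i)^`M(i)^`M(j)^`M(j)
      + \sum_(i < n | (i < k)%N) f^`M(i)^`M(i)^`M(o)^`M(o).
  rewrite [X in _ = _ + X]big_mkcond -big_split /=; apply: eq_bigr => i _.
  exact: (big_ord_cond_ltnS (fun j => (i < j)%N) _ lt_kn).
have mean_S2 : coord_mean t o (\sum_(i < n | (i < k)%N) f^`M(i)^`M(i))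
    = \sum_(i < n | (i < k)%N) f^`M(i)^`M(i)
      + (t ^+ 2 / 6) *: \sum_(i < n | (i < k)%N) f^`M(i)^`M(i)^`M(o)^`M(o).
  rewrite coord_mean_sum scaler_sumr -big_split /=.
  by apply: eq_bigr => i _; exact: coord_mean_mderiv2.
have mean_S4 : coord_mean t o (\sum_(i < n | (i < k)%N) f^`M(i)^`M(i)^`M(i)^`M(i))
    = \sum_(i < n | (i < k)%N) f^`M(i)^`M(i)^`M(i)^`M(i).
  by rewrite coord_mean_sum; apply: eq_bigr => i _; exact: coord_mean_mderiv4.
have mean_S22 :
    coord_mean t o (\sum_(i < n) \sum_(j < n | (i < j < k)%N) f^`M(i)^`M(i)^`M(j)^`M(j))
    = \sum_(i < n) \sum_(j < n | (i < j < k)%N) f^`M(i)^`M(i)^`M(j)^`M(j).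
  rewrite coord_mean_sum; apply: eq_bigr => i _.
  by rewrite coord_mean_sum; apply: eq_bigr => j _; exact: coord_mean_mderiv4.
rewrite /steklov_poly cross_sum !(big_ord_cond_ltnS xpredT _ lt_kn) /= -/o.
rewrite !coord_meanD !coord_meanZ mean_S2 mean_S4 mean_S22.
by rewrite /coord_mean -!mul_mpolyC; ring.
Qed.

Definition split_point (x : 'I_n -> R) k (y : nat -> R) : 'I_n -> R :=
  fun i => if (i < k)%N then x i else y i.

Lemma iter_int_steklov_poly (x : 'I_n -> R) (x' : nat -> R) :
  (forall i : 'I_n, x' i = x i) -> forall k, (k <= n)%N -> forall y,
  iter_int k (fun y => f.@[fun i : 'I_n => y i]) x' t y
  = (2 * t) ^+ k * (steklov_poly k).@[split_point x k y].
Proof.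
move=> x'E; elim=> [|k IH] lt_kn y /=.
  by rewrite expr0 mul1r steklov_poly0; apply: meval_eq => i; rewrite /split_point ltn0.
set o := Ordinal lt_kn; set z := split_point x k.+1 y.
have zo : z o = x o by rewrite /z /split_point ltnSn.
rewrite (x'E o) -zo; apply: is_RInt_unique.
rewrite -coord_mean_steklov_poly -/o exprSr -mulrA.
have deg_o : {in msupp (steklov_poly k), forall m : 'X_{1..n}, (m o <= 5)%N}.
  move=> m /msize_mdeg_lt lt_m5; have le_m5 := leq_trans lt_m5 (msize_steklov_poly k).
  by apply: leq_trans (ltnW le_m5); rewrite mdegE (bigD1 o) //= leq_addr.
have int_k := is_RInt_mull (c := (2 * t) ^+ k)
  (is_RInt_meval_coord (z := z) (t := t) deg_o).
apply: (is_RInt_ext _ _ _ _ _ _ int_k) => s _.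
rewrite (IH (ltnW lt_kn)); congr (_ * _); apply: meval_eq => i /=.
by rewrite /z /split_point /upd -val_eqE /= ltnS; case: ltngtP.
Qed.

End SteklovPoly.

Theorem theorem1 (n : nat) (hn : (0 < n)%N) (f : {mpoly R[n]})
  (hdeg : (msize f <= 5)%N) (x : 'I_n -> R) (t : R) (ht : 0 < t) :
  steklov f x t =
    f.@[x]
    + t ^+ 2 / 6 * (\sum_(i < n) (f^`M(i)^`M(i)).@[x])
    + (1 / 120 * (\sum_(i < n) (f^`M(i)^`M(i)^`M(i)^`M(i)).@[x])
       + 1 / 36 * (\sum_(i < n) \sum_(j < n | (i < j)%N)
                     (f^`M(i)^`M(i)^`M(j)^`M(j)).@[x])) * t ^+ 4.
Proof.
pose x' k := if insub k is Some i then x i else 0.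
have x'E (i : 'I_n) : x' i = x i by rewrite /x' valK.
have split_full : split_point x n (fun=> 0) =1 x by move=> i; rewrite /split_point ltn_ord.
rewrite /steklov (iter_int_steklov_poly t hdeg x'E (leqnn n)) (meval_eq _ split_full).
rewrite RinvE RpowE RmultE IZRposE INRE /= mulKf ?expf_neq0 ?mulf_neq0 ?lt0r_neq0 //.
have meval_cross : (\sum_(i < n) \sum_(j < n | (i < j)%N) f^`M(i)^`M(i)^`M(j)^`M(j)).@[x]
    = \sum_(i < n) \sum_(j < n | (i < j)%N) (f^`M(i)^`M(i)^`M(j)^`M(j)).@[x].
  by rewrite raddf_sum; apply: eq_bigr => i _; rewrite raddf_sum.
rewrite steklov_poly_full !mevalD !mevalZ meval_cross !raddf_sum /=.
by field.
Qed.
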